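(* There exist an environment $E$ and a total preorder $\succeq$ on $\Pi^E$ such that $\succeq\in\mathrm{Ord}_{\mathrm{LTL}}(E)$ but $\succeq\notin\mathrm{Ord}_{\mathrm{ONMR}}(E)$.
   Context: An environment is a tuple $E=(\mathcal S,\mathcal A,\mathcal T,\mathcal I)$ where $\mathcal S,\mathcal A$ are finite nonempty sets, $\mathcal T:\mathcal S\times\mathcal A\to\Delta(\mathcal S)$ and $\mathcal I\in\Delta(\mathcal S)$. A policy is a map $\pi:\mathcal S\to\Delta(\mathcal A)$ (stationary, possibly stochastic); $\Pi^E$ denotes the set of all policies. A trajectory $\xi=(s_0,a_0,s_1,a_1,\dots)\in\Xi:=\mathcal S\times(\mathcal A\times\mathcal S)^\omega$ is generated under $\pi$ by $s_0\sim\mathcal I$, $a_t\sim\pi(s_t)$, $s_{t+1}\sim\mathcal T(s_t,a_t)$; $\mathbb E^\pi_\xi$ denotes expectation under this distribution. An objective-specification formalism $X$ assigns to each environment $E$ a set of objective specifications, each inducing a total preorder $\succeq$ on $\Pi^E$; $\mathrm{Ord}_X(E)$ is the set of total preorders so induced. A specification defining a scalar $J:\Pi^E\to\mathbb R$ induces $\pi_1\succeq\pi_2\iff J(\pi_1)\ge J(\pi_2)$. ONMR: specification $(\mathcal R,f,\gamma)$ with $\mathcal R:\mathcal S\times\mathcal A\times\mathcal S\to\mathbb R$, $f:\mathbb R\to\mathbb R$, $\gamma\in[0,1)$; $J(\pi)=f\big(\mathbb E^\pi_\xi[\sum_{t=0}^\infty\gamma^t\mathcal R(s_t,a_t,s_{t+1})]\big)$.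 LTL: specification $(\varphi)$ with $\varphi$ a linear temporal logic formula whose atomic propositions are the transitions $(s,a,s')\in\mathcal S\times\mathcal A\times\mathcal S$, built with $\neg,\lor,\land,\to$ and the temporal operators $\bigcirc$ (next), $\square$ (always), $\lozenge$ (eventually), $\mathcal U$ (until). Semantics on a trajectory $\xi$ at time $t$: an atomic proposition $(s,a,s')$ holds iff $(s_t,a_t,s_{t+1})=(s,a,s')$; $\bigcirc\psi$ holds iff $\psi$ holds at $t+1$; $\square\psi$ iff $\psi$ holds at every $t'\ge t$; $\lozenge\psi$ iff $\psi$ holds at some $t'\ge t$; $\psi\,\mathcal U\,\chi$ iff there is $t'\ge t$ with $\chi$ holding at $t'$ and $\psi$ holding at every $t''$ with $t\le t''<t'$; Boolean connectives as usual. $\varphi(\xi)=1$ if $\varphi$ holds at time $0$ and $0$ otherwise; $J(\pi)=\mathbb E^\pi_\xi[\varphi(\xi)]$. *)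

From HB Require Import structures.
From mathcomp Require Import all_boot all_order all_algebra.
From mathcomp Require Import all_classical all_reals all_analysis.
From mathcomp Require Import Rstruct Rstruct_topology.
From Stdlib Require Rdefinitions.

Set Implicit Arguments.
Unset Strict Implicit.
Unset Printing Implicit Defensive.

Import Order.TTheory GRing.Theory Num.Theory.
Local Open Scope classical_set_scope.
Local Open Scope ring_scope.

Notation R := Rdefinitions.R.

Definition is_dist (X : finType) (p : X -> R) : Prop :=
  (forall x, 0 <= p x) /\ \sum_(x : X) p x = 1.

Record env := Env {
  St : finType;
  Ac : finType;
  St_ne : (0 < #|{: St}|)%N;
  Ac_ne : (0 < #|{: Ac}|)%N;
  Tr : St -> Ac -> St -> R;          (* Tr s a s' = T(s,a)(s') *)
  Ini : St -> R;
  Tr_dist : forall s a, is_dist (Tr s a);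
  Ini_dist : is_dist Ini }.

Definition policy (E : env) :=
  {p : St E -> Ac E -> R | forall s, is_dist (p s)}.

Definition pol_fun (E : env) (pi : policy E) : St E -> Ac E -> R := proj1_sig pi.

Definition traj (E : env) := nat -> (St E * Ac E)%type.

Fixpoint pp_tail (E : env) (pi : policy E) (prev : St E * Ac E)
    (h : seq (St E * Ac E)) : R :=
  match h with
  | [::] => 1
  | x :: h' => Tr prev.1 prev.2 x.1 * pol_fun pi x.1 x.2 * pp_tail pi x h'
  end.

Definition prefix_prob (E : env) (pi : policy E) (h : seq (St E * Ac E)) : R :=
  match h with
  | [::] => 1
  | x :: h' => Ini x.1 * pol_fun pi x.1 x.2 * pp_tail pi x h'
  end.

Definition cyl (E : env) (xi : traj E) (n : nat) : set (traj E) :=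
  [set xi' | forall t, (t < n)%N -> xi' t = xi t].

Definition cyl_prob (E : env) (pi : policy E) (xi : traj E) (n : nat) : R :=
  prefix_prob pi (mkseq xi n).

(* The trajectory distribution under pi: the (Caratheodory) outer measure
   generated by the cylinder probabilities; on measurable sets (e.g. the
   satisfaction sets of LTL formulas) this is the probability measure on
   trajectories. *)
Definition traj_outer (E : env) (pi : policy E) (X : set (traj E)) : \bar R :=
  ereal_inf [set v : \bar R | exists c : nat -> (traj E * nat)%type,
     X `<=` \bigcup_k cyl (c k).1 (c k).2 /\
     v = (\sum_(0 <= k <oo) (cyl_prob pi (c k).1 (c k).2)%:E)%E].

Definition traj_prob (E : env) (pi : policy E) (X : set (traj E)) : R :=
  fine (traj_outer pi X).

Inductive ltl (S A : Type) : Type :=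
  | LAtom of S & A & S
  | LNot of ltl S A
  | LOr of ltl S A & ltl S A
  | LAnd of ltl S A & ltl S A
  | LImp of ltl S A & ltl S A
  | LNext of ltl S A
  | LAlways of ltl S A
  | LEventually of ltl S A
  | LUntil of ltl S A & ltl S A.

Fixpoint ltl_holds (S A : Type) (xi : nat -> (S * A)%type) (t : nat)
    (phi : ltl S A) : Prop :=
  match phi with
  | LAtom s a s' => ((xi t).1, (xi t).2, (xi t.+1).1) = (s, a, s')
  | LNot p => ~ ltl_holds xi t p
  | LOr p q => ltl_holds xi t p \/ ltl_holds xi t q
  | LAnd p q => ltl_holds xi t p /\ ltl_holds xi t q
  | LImp p q => ltl_holds xi t p -> ltl_holds xi t q
  | LNext p => ltl_holds xi t.+1 p
  | LAlways p => forall t', (t <= t')%N -> ltl_holds xi t' p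
  | LEventually p => exists t', (t <= t')%N /\ ltl_holds xi t' p
  | LUntil p q => exists t', (t <= t')%N /\ ltl_holds xi t' q /\
                    forall t'', (t <= t'')%N -> (t'' < t')%N -> ltl_holds xi t'' p
  end.

Definition J_LTL (E : env) (phi : ltl (St E) (Ac E)) (pi : policy E) : R :=
  traj_prob pi [set xi | ltl_holds xi 0 phi].

(* E[R(s_t,a_t,s_{t+1})] = sum over length-(t+2) prefixes. *)
Definition exp_reward_at (E : env) (Rw : St E -> Ac E -> St E -> R)
    (pi : policy E) (t : nat) : R :=
  \sum_(h : (t.+2).-tuple (St E * Ac E))
     prefix_prob pi h *
     Rw (tnth h (inord t)).1 (tnth h (inord t)).2 (tnth h (inord t.+1)).1.

(* E[sum_t gamma^t R(s_t,a_t,s_{t+1})] (by linearity; rewards bounded). *)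
Definition disc_value (E : env) (Rw : St E -> Ac E -> St E -> R) (gamma : R)
    (pi : policy E) : R :=
  limn (series (fun t : nat => gamma ^+ t * exp_reward_at Rw pi t)).

Definition J_ONMR (E : env) (Rw : St E -> Ac E -> St E -> R) (f : R -> R)
    (gamma : R) (pi : policy E) : R :=
  f (disc_value Rw gamma pi).

Definition total_preorder (T : Type) (rel : T -> T -> Prop) : Prop :=
  (forall x, rel x x) /\ (forall x y z, rel x y -> rel y z -> rel x z) /\
  (forall x y, rel x y \/ rel y x).

Definition induced_by (T : Type) (rel : T -> T -> Prop) (J : T -> R) : Prop :=
  forall x y, rel x y <-> J y <= J x.

Definition in_Ord_LTL (E : env) (rel : policy E -> policy E -> Prop) : Prop :=
  exists phi : ltl (St E) (Ac E), induced_by rel (J_LTL phi).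

Definition in_Ord_ONMR (E : env) (rel : policy E -> policy E -> Prop) : Prop :=
  exists (Rw : St E -> Ac E -> St E -> R) (f : R -> R) (gamma : R),
    0 <= gamma < 1 /\ induced_by rel (J_ONMR Rw f gamma).

From mathcomp Require Import all_boot all_order all_algebra.
From mathcomp Require Import all_classical all_reals all_analysis.
From mathcomp Require Import Rstruct Rstruct_topology.
From mathcomp Require Import ring lra.

Set Implicit Arguments.
Unset Strict Implicit.
Unset Printing Implicit Defensive.

Import Order.TTheory GRing.Theory Num.Theory.
Local Open Scope classical_set_scope.
Local Open Scope ring_scope.

(* Take one state and three actions.  There the expected reward at every step
   is the mean reward of the action distribution, which is linear in it; for
   any reward, the point mass on some action has the same mean reward as a
   strict mixture of two distinct actions, so every ONMR specification ranks
   the two policies equally.  The LTL formula "always a0, or always a1, or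
   always a2" separates them: it holds almost surely under a point mass, while
   under a mixture of two actions its runs are covered by three cylinders of
   length N whose probabilities w(a)^N tend to 0. *)

Lemma induced_total_preorder (T : Type) (J : T -> R) :
  total_preorder (fun x y => J y <= J x).
Proof.
split; first by move=> x; exact: le_refl.
split; first by move=> x y z Hxy Hyz; exact: le_trans Hyz Hxy.
by move=> x y; apply/orP; exact: le_total.
Qed.

Section TrajectoryMeasure.
Variables (E : env) (pi : policy E).

Lemma pol_fun_ge0 s a : 0 <= pol_fun pi s a.
Proof. by case: pi => p p_dist; case: (p_dist s). Qed.

Lemma pp_tail_ge0 prev h : 0 <= pp_tail pi prev h.
Proof.
elim: h prev => [|x h IH] prev //=.
have [Tr_ge0 _] := Tr_dist prev.1 prev.2.
by rewrite !mulr_ge0 ?pol_fun_ge0.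
Qed.

Lemma prefix_prob_ge0 h : 0 <= prefix_prob pi h.
Proof.
case: h => [|x h] //=; have [Ini_ge0 _] := Ini_dist E.
by rewrite !mulr_ge0 ?pol_fun_ge0 ?pp_tail_ge0.
Qed.

Lemma cyl_prob_ge0 xi n : 0 <= cyl_prob pi xi n.
Proof. exact: prefix_prob_ge0. Qed.

Lemma cyl_probE xi xi' n : cyl xi n xi' -> cyl_prob pi xi' n = cyl_prob pi xi n.
Proof.
move=> xi'_xi; rewrite /cyl_prob /mkseq; congr prefix_prob.
by apply/eq_in_map => t; rewrite mem_iota add0n => /andP[_ /xi'_xi].
Qed.

Local Open Scope ereal_scope.

Lemma traj_outer_ge0 X : 0 <= traj_outer pi X.
Proof.
apply: le_ereal_inf_tmp => _ [c [_ ->]].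
by apply: nneseries_ge0 => k _ _; rewrite lee_fin cyl_prob_ge0.
Qed.

Lemma traj_outer_ge X xi p :
  X xi -> (forall n, p <= cyl_prob pi xi n)%R -> p%:E <= traj_outer pi X.
Proof.
move=> Xxi p_le; apply: le_ereal_inf_tmp => _ [c [X_cover ->]].
have [k _ cyl_k] := X_cover _ Xxi.
have u_ge0 n : (0 <= n)%N -> true -> 0 <= (cyl_prob pi (c n).1 (c n).2)%:E.
  by move=> _ _; rewrite lee_fin cyl_prob_ge0.
apply: le_trans (nneseries_lim_ge k.+1 u_ge0).
rewrite big_nat_recr //= -(cyl_probE cyl_k).
by apply: lee_paddl; [apply: sume_ge0 => n _; exact: u_ge0 | rewrite lee_fin p_le].
Qed.

Lemma traj_outer_le X (c : nat -> (traj E * nat)%type) N :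
  X `<=` \bigcup_k cyl (c k).1 (c k).2 ->
  (forall k, (N <= k)%N -> cyl_prob pi (c k).1 (c k).2 = 0%R) ->
  traj_outer pi X <= (\sum_(k < N) cyl_prob pi (c k).1 (c k).2)%:E.
Proof.
move=> X_cover c_null; apply: ge_ereal_inf; eexists; first by exists c.
rewrite (nneseries_split _ N) => [|k _]; last by rewrite lee_fin cyl_prob_ge0.
rewrite add0n eseries0 ?adde0 => [|k Nk _]; last by rewrite c_null.
by rewrite sumEFin big_mkord.
Qed.

Lemma traj_outerE X q :
  traj_outer pi X <= q%:E -> traj_outer pi X = (traj_prob pi X)%:E.
Proof. by rewrite /traj_prob; case: (traj_outer pi X) (traj_outer_ge0 X). Qed.

End TrajectoryMeasure.

Lemma sum_tuple_prod_tnth (T : finType) n (k : 'I_n) (F G : T -> R) :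
  \sum_(h : n.-tuple T) (\prod_(x <- h) F x) * G (tnth h k) =
  (\prod_(i < n | i != k) \sum_x F x) * \sum_x F x * G x.
Proof.
pose H (i : 'I_n) x := F x * (if i == k then G x else 1).
transitivity (\sum_(h : n.-tuple T) \prod_(i < n) H i (tnth h i)).
  apply: eq_bigr => h _; rewrite big_tuple big_split /=; congr (_ * _).
  by rewrite (bigD1 k) //= eqxx big1 ?mulr1 // => i /negbTE ->.
rewrite (reindex (@tuple_of_finfun T n)); last first.
  by exists finfun_of_tuple => x _; [apply: tuple_of_finfunK|apply: finfun_of_tupleK].
transitivity (\sum_(f : {ffun 'I_n -> T}) \prod_(i < n) H i (f i)).
  by apply: eq_bigr => f _; apply: eq_bigr => i _; rewrite tnth_map tnth_ord_tuple.
rewrite -bigA_distr_bigA /= (bigD1 k) //= mulrC; congr (_ * _).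
  by apply: eq_bigr => i /negbTE Hi; apply: eq_bigr => x _; rewrite /H Hi mulr1.
by apply: eq_bigr => x _; rewrite /H eqxx.
Qed.

Lemma sum_unit (F : unit -> R) : \sum_u F u = F tt.
Proof. by rewrite (big_pred1 tt) // => -[]. Qed.

Lemma is_dist_unit : is_dist (fun _ : unit => 1).
Proof. by split => //; rewrite sum_unit. Qed.

Lemma card_unit_gt0 : (0 < #|{: unit}|)%N.
Proof. by rewrite card_unit. Qed.

Section Bandit.
Variables (A : finType) (A_ne : (0 < #|{: A}|)%N).

Definition bandit : env :=
  @Env unit A card_unit_gt0 A_ne (fun _ _ _ => 1) (fun _ => 1)
    (fun _ _ => is_dist_unit) is_dist_unit.

Definition action_policy (w : A -> R) (w_dist : is_dist w) : policy bandit :=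
  exist (fun p : unit -> A -> R => forall s, is_dist (p s)) (fun _ => w) (fun _ => w_dist).

Variables (w : A -> R) (w_dist : is_dist w).

Lemma prefix_prob_action_policy h :
  prefix_prob (action_policy w_dist) h = \prod_(x <- h) w x.2.
Proof.
have pp_tailE prev h' : pp_tail (action_policy w_dist) prev h' = \prod_(x <- h') w x.2.
  by elim: h' prev => [|x h' IH] prev /=; rewrite ?big_nil // big_cons IH mul1r.
by case: h => [|x h] /=; rewrite ?big_nil // big_cons pp_tailE mul1r.
Qed.

Lemma exp_reward_at_action_policy Rw t :
  exp_reward_at Rw (action_policy w_dist) t = \sum_a w a * Rw tt a tt.
Proof.
have RwE u a u' : Rw u a u' = Rw tt a tt by case: u; case: u'.
have sum_pair (F : A -> R) : \sum_(x : unit * A) F x.2 = \sum_a F a.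
  by rewrite -(pair_bigA _ (fun _ a => F a)) sum_unit.
rewrite /exp_reward_at.
under eq_bigr do rewrite prefix_prob_action_policy RwE.
rewrite (sum_tuple_prod_tnth _ (fun x => w x.2) (fun x => Rw tt x.2 tt)).
rewrite sum_pair (sum_pair (fun a => w a * Rw tt a tt)).
by case: w_dist => _ ->; rewrite big1 ?mul1r.
Qed.

Definition const_traj (a : A) : traj bandit := fun _ => (tt, a).

Lemma cyl_prob_const_traj a n :
  cyl_prob (action_policy w_dist) (const_traj a) n = w a ^+ n.
Proof.
rewrite /cyl_prob prefix_prob_action_policy /mkseq big_map.
elim: n => [|n IH]; first by rewrite big_nil.
by rewrite -addn1 iotaD big_cat big_seq1 IH addn1 exprSr.
Qed.

End Bandit.

Arguments const_traj {A A_ne} a.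
Arguments action_policy {A A_ne w} w_dist.
Arguments cyl_prob_const_traj {A A_ne w} w_dist a n.

Lemma strict_convex_comb (K : realFieldType) (a b c : K) :
  b < a < c -> exists2 l : K, 0 < l < 1 & l * b + (1 - l) * c = a.
Proof.
move=> /andP[ba ac]; have cb_gt0 : 0 < c - b by lra.
exists ((c - a) / (c - b)); last by field; lra.
rewrite divr_gt0 ?subr_gt0 //=; last lra.
by rewrite ltr_pdivrMr // mul1r; lra.
Qed.

(* Among three values, either two coincide or the middle one is a strict
   convex combination of the other two. *)
Lemma exists_strict_convex_comb3 (K : realFieldType) (r : 'I_3 -> K) :
  exists (m i j : 'I_3) (l : K), [/\ i != j, 0 < l < 1 & l * r i + (1 - l) * r j = r m].
Proof.
have tie (i j : 'I_3) : i != j -> r i = r j -> exists (m i j : 'I_3) (l : K),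
    [/\ i != j, 0 < l < 1 & l * r i + (1 - l) * r j = r m].
  move=> ij rij; exists i, i, j, 2^-1; split => //; last by rewrite -rij; ring.
  by apply/andP; split; lra.
have middle (m i j : 'I_3) : i != j -> r i < r m < r j -> exists (m i j : 'I_3) (l : K),
    [/\ i != j, 0 < l < 1 & l * r i + (1 - l) * r j = r m].
  by move=> ij /strict_convex_comb[l l_open lE]; exists m, i, j, l.
have [r01|n01] := eqVneq (r 0) (r 1); first exact: tie r01.
have [r02|n02] := eqVneq (r 0) (r 2); first exact: tie r02.
have [r12|n12] := eqVneq (r 1) (r 2); first exact: tie r12.
case/orP: (lt_total n01) => ?; case/orP: (lt_total n02) => ?; case/orP: (lt_total n12) => ?;
  first [ by apply: (middle 0 1 2) => //; apply/andP; split; lra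
        | by apply: (middle 0 2 1) => //; apply/andP; split; lra
        | by apply: (middle 1 0 2) => //; apply/andP; split; lra
        | by apply: (middle 1 2 0) => //; apply/andP; split; lra
        | by apply: (middle 2 0 1) => //; apply/andP; split; lra
        | by apply: (middle 2 1 0) => //; apply/andP; split; lra
        | lra ].
Qed.

Lemma exists_ord3_neq2 (i j : 'I_3) : exists2 z : 'I_3, z != i & z != j.
Proof.
have : (0 < #|~: [set i; j]|)%N.
  have := cardsC [set i; j]; rewrite cards2 card_ord => card_setC.
  by rewrite -(ltn_add2l (i != j).+1) addn0 card_setC; case: (i != j).
by case/card_gt0P => z; rewrite !inE => /norP[zi zj]; exists z.
Qed.

Section ActionDistributions.
Variable A : finType.

Definition point_dist (m : A) : A -> R := fun a => (a == m)%:R.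

Definition mix_dist (i j : A) (l : R) : A -> R :=
  fun a => l * point_dist i a + (1 - l) * point_dist j a.

Lemma sum_point_dist m (F : A -> R) : \sum_a point_dist m a * F a = F m.
Proof.
rewrite (bigD1 m) //= /point_dist eqxx mul1r big1 ?addr0 //.
by move=> a /negbTE ->; rewrite mul0r.
Qed.

Lemma sum_mix_dist i j l (F : A -> R) :
  \sum_a mix_dist i j l a * F a = l * F i + (1 - l) * F j.
Proof.
under eq_bigr do rewrite mulrDl -!mulrA.
by rewrite big_split -!mulr_sumr /= !sum_point_dist.
Qed.

Lemma is_dist_point m : is_dist (point_dist m).
Proof.
split; first by move=> a; rewrite ler0n.
by have := sum_point_dist m (fun _ => 1); under eq_bigr do rewrite mulr1.
Qed.

Lemma is_dist_mix i j l : 0 <= l <= 1 -> is_dist (mix_dist i j l).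
Proof.
move=> /andP[l_ge0 l_le1]; split.
  by move=> a; rewrite addr_ge0 // mulr_ge0 ?ler0n ?subr_ge0.
have := sum_mix_dist i j l (fun _ => 1); rewrite /= !mulr1 [X in _ = X]addrC subrK => <-.
by apply: eq_bigr => a _; rewrite mulr1.
Qed.

Lemma mix_dist_lt1 i j l a : i != j -> 0 < l < 1 -> mix_dist i j l a < 1.
Proof.
move=> ij /andP[l_gt0 l_lt1]; rewrite /mix_dist /point_dist.
have [->|_] := eqVneq a i; first by rewrite (negbTE ij) mulr0 addr0 mulr1.
by case: (a == j); rewrite /= ?mulr0 ?mulr1 ?add0r; lra.
Qed.

Lemma mix_dist_out i j l z : z != i -> z != j -> mix_dist i j l z = 0.
Proof. by move=> /negbTE zi /negbTE zj; rewrite /mix_dist /point_dist zi zj !mulr0 addr0. Qed.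

End ActionDistributions.

Lemma card_ord_gt0 n : (0 < #|{: 'I_n.+1}|)%N.
Proof. by rewrite card_ord. Qed.

Definition bandit3 : env := bandit (card_ord_gt0 2).

Definition always_action (a : 'I_3) : ltl (St bandit3) (Ac bandit3) :=
  LAlways (LAtom tt a tt).

Definition constant_action : ltl (St bandit3) (Ac bandit3) :=
  LOr (always_action 0) (LOr (always_action 1) (always_action 2)).

Lemma constant_action_const_traj a : ltl_holds (const_traj a : traj bandit3) 0 constant_action.
Proof.
have ord3E : a = 0 \/ a = 1 \/ a = 2.
  by case: a => -[|[|[|//]]] a_lt3; [left|right; left|right; right]; apply: val_inj.
by case: ord3E => [->|[->|->]] /=; [left|right; left|right; right].
Qed.

Lemma constant_actionP (xi : traj bandit3) :
  ltl_holds xi 0 constant_action -> exists a, forall t, xi t = (tt, a).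
Proof.
by move=> /= [H|[H|H]]; [exists 0|exists 1|exists 2] => t;
  case: (xi t) (H t isT) => -[] b /= [->].
Qed.

Lemma J_LTL_point (m : 'I_3) : J_LTL constant_action (action_policy (is_dist_point m)) = 1.
Proof.
set pi : policy bandit3 := action_policy _.
set X := [set xi | ltl_holds xi 0 constant_action].
have [other m_o _] := exists_ord3_neq2 m m.
pose c k : traj bandit3 * nat := if k == 0%N then (const_traj m, 0%N) else (const_traj other, 1%N).
have outer_le1 : (traj_outer pi X <= 1%:E)%E.
  have -> : 1 = \sum_(k < 1) cyl_prob pi (c k).1 (c k).2.
    by rewrite big_ord1 /= cyl_prob_const_traj expr0.
  apply: traj_outer_le => [xi _|[|k] // _]; first by exists 0%N.
  by rewrite /= cyl_prob_const_traj expr1 /point_dist (negbTE m_o).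
have outer_ge1 : (1%:E <= traj_outer pi X)%E.
  apply: (traj_outer_ge (xi := const_traj m)) => [|n]; first exact: constant_action_const_traj.
  by rewrite cyl_prob_const_traj /point_dist eqxx expr1n.
rewrite /J_LTL -/X; apply/le_anti.
by rewrite -!lee_fin -(traj_outerE outer_le1) outer_le1 outer_ge1.
Qed.

(* [w z = 0] provides the zero-probability cylinders padding the finite cover. *)
Lemma J_LTL_lt1 (w : 'I_3 -> R) (w_dist : is_dist w) (z : 'I_3) :
  (forall a, w a < 1) -> w z = 0 -> J_LTL constant_action (action_policy w_dist) < 1.
Proof.
move=> w_lt1 wz.
set pi : policy bandit3 := action_policy _.
set X := [set xi | ltl_holds xi 0 constant_action].
have [N _ wN] : \forall n \near \oo, forall a : 'I_3, w a ^+ n < 3^-1.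
  apply: filter_forall => a; have [w_ge0 _] := w_dist.
  have /cvgr_lt : (fun n => w a ^+ n) @ \oo --> (0 : R) by apply: cvg_expr; rewrite ger0_norm.
  by apply; lra.
pose c k : traj bandit3 * nat := if (k < 3)%N then (const_traj (inord k), N) else (const_traj z, 1%N).
have outer_le : (traj_outer pi X <= (\sum_(k < 3) cyl_prob pi (c k).1 (c k).2)%:E)%E.
  apply: traj_outer_le => [xi /constant_actionP[a xiE]|k k_ge3]; last first.
    by rewrite /c ltnNge k_ge3 /= cyl_prob_const_traj wz expr1.
  by exists (val a) => //= t _; rewrite /c ltn_ord inord_val xiE.
rewrite /J_LTL -/X -lte_fin -(traj_outerE outer_le); apply: le_lt_trans outer_le _.
rewrite lte_fin !big_ord_recr big_ord0 /= !cyl_prob_const_traj add0r.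
have {}wN a : w a ^+ N < 3^-1 := wN N (leqnn N) a.
by have := wN (inord 0); have := wN (inord 1); have := wN (inord 2); lra.
Qed.

Theorem mainTheorem13 :
  exists (E : env) (rel : policy E -> policy E -> Prop),
    total_preorder rel /\ in_Ord_LTL rel /\ ~ in_Ord_ONMR rel.
Proof.
exists bandit3, (fun x y => J_LTL constant_action y <= J_LTL constant_action x).
split; first exact: induced_total_preorder.
split; first by exists constant_action.
move=> [Rw [f [gamma [_ induced]]]].
have [m [i [j [l [ij l_open lE]]]]] := exists_strict_convex_comb3 (fun a => Rw tt a tt).
have [z zi zj] := exists_ord3_neq2 i j.
have l_closed : 0 <= l <= 1 by case/andP: l_open => *; apply/andP; split; lra.
pose point : policy bandit3 := action_policy (is_dist_point m).
pose mix : policy bandit3 := action_policy (is_dist_mix i j l_closed).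
have same_reward : exp_reward_at Rw point = exp_reward_at Rw mix.
  apply/funext => t; rewrite /point /mix !exp_reward_at_action_policy.
  by rewrite sum_point_dist sum_mix_dist lE.
have same_value : J_ONMR Rw f gamma point = J_ONMR Rw f gamma mix.
  by rewrite /J_ONMR /disc_value same_reward.
have := (induced mix point).2; rewrite same_value => /(_ (le_refl _)).
rewrite J_LTL_point; apply/negP; rewrite -ltNge.
exact: J_LTL_lt1 (fun a => mix_dist_lt1 a ij l_open) (mix_dist_out l zi zj).
Qed.
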